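(* Under the hypotheses of Proposition 2 (invariance $f(x,\mu^0(x))\in S^0$ for all $x\in S^0$, terminal cost $\bar J_{S^0}$, lookahead $\ell\ge1$), for every $x\in X$, writing $x'=f(x,\tilde\mu(x))$, we have $$g(x,\tilde\mu(x))+\tilde J_{S^0}(x')\le \tilde J_{S^0}(x).$$ In particular, if $\tilde J_{S^0}(x)<\infty$ then $\tilde J_{S^0}(x')<\infty$ (recursive feasibility), and $\tilde J_{S^0}$ is nonincreasing along any trajectory generated by the rollout policy $\tilde\mu$.
   Context: Deterministic infinite-horizon problem: arbitrary state space $X$ and control space $U$, dynamics $x_{k+1}=f(x_k,u_k)$ with $f:X\times U\to X$, nonempty control constraint sets $U(x)\subset U$, and stage cost $g(x,u)\in[0,\infty]$ for all $x\in X$, $u\in U(x)$. A stationary policy is a map $\mu:X\to U$ with $\mu(x)\in U(x)$; its cost function is $J_\mu(x_0)=\sum_{k=0}^\infty g(x_k,\mu(x_k))$ with $x_{k+1}=f(x_k,\mu(x_k))$. Assumption: for every $J:X\to[0,\infty]$ and every $x\in X$, $\inf_{u\in U(x)}\{g(x,u)+J(f(x,u))\}$ is attained. Given $S^0\subset X$ and $\mu^0$, $\bar J_{S^0}(x)=J_{\mu^0}(x)$ if $x\in S^0$ and $\infty$ otherwise. With $J_0=\bar J_{S^0}$, $J_{k+1}(x)=\min_{u\in U(x)}\{g(x,u)+J_k(f(x,u))\}$, set $\tilde J_{S^0}=J_\ell$ (the optimal value of minimizing $\sum_{k=0}^{\ell-1}g(x_k,u_k)+\bar J_{S^0}(x_\ell)$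 over $u_k\in U(x_k)$ with $x_0=x$, $x_{k+1}=f(x_k,u_k)$), and the rollout policy $\tilde\mu(x)\in\arg\min_{u\in U(x)}\{g(x,u)+J_{\ell-1}(f(x,u))\}$ (the first control of a minimizing sequence). *)

From mathcomp Require Import all_boot all_order all_algebra.
From mathcomp Require Import boolp classical_sets reals ereal topology sequences.
Set Implicit Arguments. Unset Strict Implicit. Unset Printing Implicit Defensive.
Import Order.TTheory GRing.Theory Num.Theory.
Local Open Scope classical_set_scope.
Local Open Scope ereal_scope.

Section DP.
Context {R : realType} {X U : Type}.
Variables (f : X -> U -> X) (g : X -> U -> \bar R).

Fixpoint traj (mu : X -> U) (x0 : X) (k : nat) : X :=
  match k with 0%N => x0 | k'.+1 => f (traj mu x0 k') (mu (traj mu x0 k')) end.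

Definition Jpol (mu : X -> U) (x0 : X) : \bar R :=
  \sum_(0 <= k <oo) g (traj mu x0 k) (mu (traj mu x0 k)).

Definition Jbar (S0 : set X) (mu0 : X -> U) (x : X) : \bar R :=
  if `[< S0 x >] then Jpol mu0 x else +oo.

Definition bellman (Uc : X -> set U) (J : X -> \bar R) (x : X) : \bar R :=
  ereal_inf [set g x u + J (f x u) | u in Uc x].

Fixpoint Jiter (Uc : X -> set U) (J0 : X -> \bar R) (k : nat) : X -> \bar R :=
  match k with 0%N => J0 | k'.+1 => bellman Uc (Jiter Uc J0 k') end.

End DP.

From mathcomp Require Import all_boot all_order all_algebra.
From mathcomp Require Import boolp classical_sets reals ereal topology sequences.
Set Implicit Arguments. Unset Strict Implicit. Unset Printing Implicit Defensive.
Import Order.TTheory GRing.Theory Num.Theory.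
Local Open Scope classical_set_scope.
Local Open Scope ereal_scope.

(* The argument is the classical monotonicity argument of dynamic programming.
   1. The Bellman operator T is monotone, and the cost of a policy satisfies
      J_mu(x) = g(x, mu x) + J_mu(f x (mu x)).
   2. Because S0 is invariant under mu0, this one-step identity gives
      T \bar J_{S0} <= \bar J_{S0}; by monotonicity of T the value iterates
      J_k = T^k \bar J_{S0} then form a pointwise nonincreasing sequence.
   3. A control that attains the minimum in (T J_{l-1})(x) costs exactly
      (T J_{l-1})(x) = J_l(x); since J_l <= J_{l-1}, the rollout control
      mut(x) satisfies g(x, mut x) + J_l(x') <= J_l(x). *)

Section RolloutDescent.
Context {R : realType} {X U : Type}.
Variables (f : X -> U -> X) (g : X -> U -> \bar R) (Uc : X -> set U).

Lemma bellman_mono (J1 J2 : X -> \bar R) :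
  (forall y, J1 y <= J2 y) -> forall x, bellman f g Uc J1 x <= bellman f g Uc J2 x.
Proof.
move=> J12 x; apply: le_ereal_inf_tmp => _ [u Uu <-].
apply: le_trans (leeD2l _ (J12 _)).
by apply: ereal_inf_lbound; exists u.
Qed.

Lemma bellman_le (J : X -> \bar R) x u :
  Uc x u -> bellman f g Uc J x <= g x u + J (f x u).
Proof. by move=> Uu; apply: ereal_inf_lbound; exists u. Qed.

Lemma bellman_argmin_le (J : X -> \bar R) x u :
  (forall v, Uc x v -> g x u + J (f x u) <= g x v + J (f x v)) ->
  g x u + J (f x u) <= bellman f g Uc J x.
Proof. by move=> umin; apply: le_ereal_inf_tmp => _ [v Uv <-]; exact: umin. Qed.

Lemma traj_shift (mu : X -> U) x k :
  traj f mu (f x (mu x)) k = traj f mu x k.+1.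
Proof. by elim: k => [//|k IH] /=; rewrite IH. Qed.

Lemma Jpol_step (mu : X -> U) x :
  (forall y, 0 <= g y (mu y)) ->
  Jpol f g mu x = g x (mu x) + Jpol f g mu (f x (mu x)).
Proof.
move=> g0; rewrite /Jpol.
have g0k k : (0 <= k)%N -> 0 <= g (traj f mu x k) (mu (traj f mu x k)) by [].
rewrite (@nneseries_split _ _ 0 1 g0k) add0n big_nat1 /=.
rewrite -(nneseries_addn 1) //; congr (_ + _); apply: eq_eseriesr => k _.
by rewrite traj_shift addn1.
Qed.

Variables (S0 : set X) (mu0 : X -> U).
Hypothesis g_ge0 : forall x u, Uc x u -> 0 <= g x u.
Hypothesis Umu0 : forall x, Uc x (mu0 x).
Hypothesis S0_inv : forall x, S0 x -> S0 (f x (mu0 x)).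

Lemma bellman_Jbar_le x :
  bellman f g Uc (Jbar f g S0 mu0) x <= Jbar f g S0 mu0 x.
Proof.
case: (pselect (S0 x)) => [S0x|NS0x]; last by rewrite [leRHS]/Jbar (asboolF NS0x) leey.
apply: le_trans (bellman_le _ (Umu0 x)) _.
rewrite /Jbar (asboolT S0x) (asboolT (S0_inv S0x)).
rewrite [in leRHS](@Jpol_step mu0 x) => [//|y]; exact: g_ge0.
Qed.

Lemma Jiter_nonincreasing k x :
  Jiter f g Uc (Jbar f g S0 mu0) k.+1 x <= Jiter f g Uc (Jbar f g S0 mu0) k x.
Proof.
elim: k x => [|k IH] x; first exact: bellman_Jbar_le.
exact: bellman_mono.
Qed.

Lemma rollout_descent l x u :
  (forall v, Uc x v ->
     g x u + Jiter f g Uc (Jbar f g S0 mu0) l (f x u)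
     <= g x v + Jiter f g Uc (Jbar f g S0 mu0) l (f x v)) ->
  g x u + Jiter f g Uc (Jbar f g S0 mu0) l.+1 (f x u)
  <= Jiter f g Uc (Jbar f g S0 mu0) l.+1 x.
Proof.
move=> umin; apply: le_trans (bellman_argmin_le umin).
exact/leeD2l/Jiter_nonincreasing.
Qed.

End RolloutDescent.

Theorem mainTheorem3 (R : realType) (X U : Type)
  (f : X -> U -> X) (Uc : X -> set U) (g : X -> U -> \bar R)
  (S0 : set X) (mu0 : X -> U) (l : nat) (mut : X -> U) :
  (forall x, Uc x !=set0) ->
  (forall x u, Uc x u -> 0 <= g x u) ->
  (* the infimum in the Bellman operator is attained for every J : X -> [0,oo] *)
  (forall (J : X -> \bar R), (forall y, 0 <= J y) -> forall x,
     exists2 u, Uc x u & forall v, Uc x v -> g x u + J (f x u) <= g x v + J (f x v)) ->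
  (forall x, Uc x (mu0 x)) ->
  (forall x, S0 x -> S0 (f x (mu0 x))) ->
  (1 <= l)%N ->
  (* rollout policy: first control of a minimizing l-step sequence *)
  (forall x, Uc x (mut x) /\
     forall v, Uc x v ->
       g x (mut x) + Jiter f g Uc (Jbar f g S0 mu0) l.-1 (f x (mut x))
       <= g x v + Jiter f g Uc (Jbar f g S0 mu0) l.-1 (f x v)) ->
  let Jt := Jiter f g Uc (Jbar f g S0 mu0) l in
  (forall x, g x (mut x) + Jt (f x (mut x)) <= Jt x) /\
  (forall x, Jt x < +oo -> Jt (f x (mut x)) < +oo) /\
  (forall x k, Jt (traj f mut x k.+1) <= Jt (traj f mut x k)).
Proof.
move=> _ g_ge0 _ Umu0 S0_inv; case: l => [//|l] _ mut_min Jt.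
have descent x : g x (mut x) + Jt (f x (mut x)) <= Jt x.
  by case: (mut_min x) => _ umin; exact: rollout_descent.
have Jt_step x : Jt (f x (mut x)) <= Jt x.
  apply: le_trans (descent x); apply: leeDr.
  by case: (mut_min x) => Umut _; exact: g_ge0.
split; first exact: descent.
split; first by move=> x Jtx; exact: le_lt_trans (Jt_step x) Jtx.
by move=> x k; exact: Jt_step.
Qed.
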